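(* For every integer $m\ge3$ there is a binary minimal self-orthogonal linear code with parameters $[3\cdot2^{m-1}-1,\ m,\ 2^{m-1}]_2$ and maximum weight $2^m$ (constructed from the binary simplex $[2^m-1,m,2^{m-1}]_2$ code) which violates the Ashikhmin–Barg condition.
   Context: A code $\mathbf{C}$ is self-orthogonal if $\mathbf{C}\subseteq\mathbf{C}^\perp$ for the standard inner product. A binary linear code is minimal if any two nonzero codewords $\mathbf{c},\mathbf{c}'$ with $supp(\mathbf{c}')\subseteq supp(\mathbf{c})$ are equal. Ashikhmin–Barg condition (binary): $w_{min}/w_{max}>1/2$, where $w_{min},w_{max}$ are the minimum and maximum weights of nonzero codewords. The binary simplex code of dimension $m$ is generated by the $m\times(2^m-1)$ matrix whose columns are all nonzero vectors of $\mathbf{F}_2^m$. *)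

From HB Require Import structures.
From mathcomp Require Import all_boot all_order all_algebra all_field.
Set Implicit Arguments. Unset Strict Implicit. Unset Printing Implicit Defensive.
Import Order.TTheory GRing.Theory Num.Theory.
Local Open Scope ring_scope.

Notation bcode n := {vspace 'rV['F_2]_n}.

Definition supp n (c : 'rV['F_2]_n) : {set 'I_n} := [set i | c 0 i != 0].
Definition wt n (c : 'rV['F_2]_n) : nat := #|supp c|.

Definition inner n (c c' : 'rV['F_2]_n) : 'F_2 := \sum_(i < n) c 0 i * c' 0 i.

Definition self_orthogonal n (C : bcode n) : Prop :=
  forall c c', c \in C -> c' \in C -> inner c c' = 0.

Definition minimal_code n (C : bcode n) : Prop :=
  forall c c', c \in C -> c' \in C -> c != 0 -> c' != 0 ->
    supp c' \subset supp c -> c' = c.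

Definition is_wmin n (C : bcode n) (w : nat) : Prop :=
  (exists2 c, c \in C & (c != 0) && (wt c == w)) /\
  (forall c, c \in C -> c != 0 -> (w <= wt c)%N).
Definition is_wmax n (C : bcode n) (w : nat) : Prop :=
  (exists2 c, c \in C & (c != 0) && (wt c == w)) /\
  (forall c, c \in C -> c != 0 -> (wt c <= w)%N).

Definition ashikhmin_barg n (C : bcode n) : Prop :=
  forall wmin wmax, is_wmin C wmin -> is_wmax C wmax ->
    (1 / 2 : rat) < (wmin%:R / wmax%:R : rat).

(* The code is generated by the simplex matrix (all nonzero columns of F_2^m)
   followed by 2^(m-1) copies of a fixed nonzero column a.  A nonzero linear
   form on F_2^m is nonzero on exactly half of the space, so the codeword of u
   has weight 2^(m-1) [u <> 0] + 2^(m-1) [<u, a> <> 0]: all nonzero weights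
   are 2^(m-1) or 2^m, whence w_min / w_max = 1/2.  For m >= 3 they are
   multiples of 4, and since wt (c + c') = wt c + wt c' - 2 |supp c /\ supp c'|
   such a code is self-orthogonal.  Minimality already holds on the simplex
   block: it has constant weight, so an inclusion of supports there is an
   equality, and that block determines u. *)

From HB Require Import structures.
From mathcomp Require Import all_boot all_order all_algebra all_field.
From mathcomp Require Import zify.
Import Order.TTheory GRing.Theory Num.Theory.
Local Open Scope ring_scope.
Set Implicit Arguments. Unset Strict Implicit. Unset Printing Implicit Defensive.

Lemma F2_cases (a : 'F_2) : a = 0 \/ a = 1.
Proof. by case: a => [[|[|]]] //= ?; [left|right]; apply/val_inj. Qed.

Lemma F2_neq0 (a : 'F_2) : (a != 0) = (a == 1).
Proof. by case: (F2_cases a) => ->. Qed.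

Lemma F2_natr_even k : ~~ odd k -> (k%:R : 'F_2) = 0.
Proof. by move=> /negbTE even_k; rewrite -Fp_nat_mod // modn2 even_k. Qed.

Lemma expn2_pred n : (0 < n)%N -> (2 ^ n = 2 * 2 ^ n.-1)%N.
Proof. by move=> n_gt0; rewrite -expnS prednK. Qed.

Section BinaryWords.
Variable n : nat.
Implicit Types c d u x : 'rV['F_2]_n.

Lemma in_supp c i : (i \in supp c) = (c 0 i != 0).
Proof. by rewrite inE. Qed.

Lemma supp_inj : injective (@supp n).
Proof.
move=> c d eq_cd; apply/rowP => i; move/setP/(_ i): eq_cd.
by rewrite !in_supp !F2_neq0; case: (F2_cases (c 0 i)) => ->; case: (F2_cases (d 0 i)) => ->.
Qed.

Lemma supp_subset_eq c d : supp d \subset supp c -> (wt c <= wt d)%N -> d = c.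
Proof. by move=> sub le_cd; apply: supp_inj; apply/eqP; rewrite eqEcard sub. Qed.

Lemma supp0 : supp (0 : 'rV['F_2]_n) = set0.
Proof. by apply/setP => i; rewrite in_supp inE mxE eqxx. Qed.

Lemma wt0 : wt (0 : 'rV['F_2]_n) = 0%N.
Proof. by rewrite /wt supp0 cards0. Qed.

Lemma wt_sum c : wt c = (\sum_i (c 0%R i != 0%R))%N.
Proof. by rewrite /wt -sum1_card big_mkcond; apply: eq_bigr => i _; rewrite in_supp. Qed.

Lemma inner_sym c d : inner c d = inner d c.
Proof. by apply: eq_bigr => i _; rewrite mulrC. Qed.

Lemma innerDr u c d : inner u (c + d) = inner u c + inner u d.
Proof. by rewrite /inner -big_split; apply: eq_bigr => i _; rewrite mxE mulrDr. Qed.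

Lemma inner0r u : inner u 0 = 0.
Proof. by rewrite /inner big1 // => i _; rewrite mxE mulr0. Qed.

Lemma inner_delta u i : inner u (delta_mx 0 i) = u 0 i.
Proof.
rewrite /inner (bigD1 i) //= big1 ?addr0; first by rewrite mxE !eqxx mulr1.
by move=> j /negbTE ji; rewrite mxE ji andbF mulr0.
Qed.

Lemma inner_card_supp c d : inner c d = #|supp c :&: supp d|%:R.
Proof.
rewrite /inner -sum1_card natr_sum [RHS]big_mkcond /=; apply: eq_bigr => i _.
rewrite inE !in_supp !F2_neq0.
case: (F2_cases (c 0 i)) => ->; case: (F2_cases (d 0 i)) => ->; exact/val_inj.
Qed.

Lemma supp_add c d : supp (c + d) = (supp c :|: supp d) :\: (supp c :&: supp d).
Proof.
apply/setP => i; rewrite !inE !mxE !F2_neq0.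
by case: (F2_cases (c 0 i)) => ->; case: (F2_cases (d 0 i)) => ->.
Qed.

Lemma wt_add c d : (wt (c + d) + 2 * #|supp c :&: supp d| = wt c + wt d)%N.
Proof.
have sub_IU := subset_trans (subsetIl (supp c) (supp d)) (subsetUl _ (supp d)).
rewrite /wt supp_add cardsD (setIidPr sub_IU) -cardsUI.
have := subset_leq_card sub_IU; lia.
Qed.

Lemma delta_row_neq0 i : delta_mx 0 i != 0 :> 'rV['F_2]_n.
Proof. by apply/eqP => /rowP /(_ i); rewrite !mxE !eqxx. Qed.

Lemma card_rV_F2 : #|{: 'rV['F_2]_n}| = (2 ^ n)%N.
Proof. by rewrite card_mx card_Fp // mul1n. Qed.

Lemma nonzero_coord u : u != 0 -> exists i, u 0 i != 0.
Proof.
move=> u_neq0; apply/existsP; apply: contraNT u_neq0 => /existsPn u0.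
by apply/eqP/rowP => i; move/negPn/eqP: (u0 i); rewrite mxE.
Qed.

Lemma card_inner_neq0 u :
  u != 0 -> #|[set x | inner u x != 0]| = (2 ^ n.-1)%N.
Proof.
move=> /nonzero_coord[i ui]; set A := [set x | _].
have ud : inner u (delta_mx 0 i) = 1 by apply/eqP; rewrite inner_delta -F2_neq0.
have shiftA : (+%R^~ (delta_mx 0 i)) @^-1: A = ~: A.
  by apply/setP => x; rewrite !inE innerDr ud F2_neq0; case: (F2_cases (inner u x)) => ->.
have := cardsC A; rewrite -shiftA card_preimset; last exact: addIr.
rewrite card_rV_F2 expn2_pred; first lia.
exact: leq_ltn_trans (leq0n i) (ltn_ord i).
Qed.

Lemma nonzero_orthogonal d : (1 < n)%N -> exists2 u, u != 0 & inner u d = 0.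
Proof.
(* The hyperplane orthogonal to d has at least 2^(n-1) >= 2 elements. *)
move=> n_gt1; set B := [set u | inner u d == 0].
have card_notB : (#|~: B| <= 2 ^ n.-1)%N.
  have [d0 | d_neq0] := eqVneq d 0.
    by rewrite /B d0 (_ : ~: _ = set0) ?cards0 //; apply/setP => u; rewrite !inE inner0r eqxx.
  rewrite (_ : ~: B = [set x | inner d x != 0]) ?card_inner_neq0 //.
  by apply/setP => u; rewrite !inE inner_sym.
have /card_gt1P[x [y [xB yB x_neq_y]]] : (1 < #|B|)%N.
  have := cardsC B; rewrite card_rV_F2 expn2_pred ?(ltnW n_gt1) //.
  have : (2 <= 2 ^ n.-1)%N by rewrite -{1}(expn1 2) leq_exp2l // -ltnS prednK // ltnW.
  move: card_notB; set k := (2 ^ n.-1)%N; lia.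
have [x0 | x_neq0] := eqVneq x 0; last by exists x; move: xB; rewrite inE => /eqP.
by exists y; [rewrite -x0 eq_sym | move: yB; rewrite inE => /eqP].
Qed.
End BinaryWords.

Lemma doubly_even_self_orthogonal n (C : bcode n) :
  {in C, forall c, 4 %| wt c}%N -> self_orthogonal C.
Proof.
move=> wt4 c d cC dC; rewrite inner_card_supp F2_natr_even // -dvdn2.
have := wt_add c d; have := wt4 _ (memvD cC dC); have := wt4 _ cC; have := wt4 _ dC.
move=> /dvdnP[x ->] /dvdnP[y ->] /dvdnP[z ->] E.
by apply/dvdnP; exists (y + x - z)%N; lia.
Qed.

Section RowBlocks.
Variables n1 n2 : nat.
Implicit Types (c : 'rV['F_2]_n1) (d : 'rV['F_2]_n2).

Lemma wt_row_mx c d : wt (row_mx c d) = (wt c + wt d)%N.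
Proof.
rewrite !wt_sum big_split_ord /=.
by congr (_ + _)%N; apply: eq_bigr => i _; rewrite (row_mxEl, row_mxEr).
Qed.

Lemma supp_lsub_subset c d c' d' :
  supp (row_mx c d) \subset supp (row_mx c' d') -> supp c \subset supp c'.
Proof.
move=> /subsetP sub; apply/subsetP => i.
by have := sub (lshift n2 i); rewrite !in_supp !row_mxEl.
Qed.
End RowBlocks.

Section Simplex.
Variable m : nat.
Local Notation V := 'rV['F_2]_m.
Implicit Types u v x : V.

Definition nonzero_vec (j : 'I_#|V|.-1) : V := enum_val (lift (enum_rank 0) j).

Lemma nonzero_vec_inj : injective nonzero_vec.
Proof. by move=> j k /enum_val_inj /lift_inj. Qed.

Lemma nonzero_vecP x : x != 0 -> exists j, nonzero_vec j = x.
Proof.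
move=> x_neq0; case: (unliftP (enum_rank 0) (enum_rank x)) => [j eq_x | /enum_rank_inj x0].
  by exists j; rewrite /nonzero_vec -eq_x enum_rankK.
by rewrite x0 eqxx in x_neq0.
Qed.

Lemma card_nonzero_vec (A : {set V}) : 0 \notin A -> #|nonzero_vec @^-1: A| = #|A|.
Proof.
move=> A0; rewrite -(card_imset _ nonzero_vec_inj); apply: eq_card => x.
apply/imsetP/idP => [[j] | xA]; first by rewrite inE => ? ->.
have [|j xj] := nonzero_vecP (x := x); first by apply: contraNneq A0 => <-.
by exists j; rewrite ?inE xj.
Qed.

Definition simplex_mx : 'M['F_2]_(m, #|V|.-1) := \matrix_(i, j) nonzero_vec j 0 i.

Lemma simplex_mxE u j : (u *m simplex_mx) 0 j = inner u (nonzero_vec j).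
Proof. by rewrite !mxE; apply: eq_bigr => i _; rewrite mxE. Qed.

Lemma wt_simplex u : wt (u *m simplex_mx) = ((u != 0%R) * 2 ^ m.-1)%N.
Proof.
rewrite /wt; have -> : supp (u *m simplex_mx) = nonzero_vec @^-1: [set x | inner u x != 0].
  by apply/setP => j; rewrite !inE simplex_mxE.
rewrite card_nonzero_vec ?inE ?inner0r ?eqxx //.
have [-> | u_neq0] := eqVneq u 0; last by rewrite card_inner_neq0 // mul1n.
rewrite mul0n; apply/eqP; rewrite cards_eq0; apply/eqP/setP => x.
by rewrite !inE inner_sym inner0r eqxx.
Qed.

Lemma simplex_mx_inj u v : u *m simplex_mx = v *m simplex_mx -> u = v.
Proof.
move=> eq_uv; apply/eqP; rewrite -subr_eq0.
have := wt_simplex (u - v); rewrite mulmxBl eq_uv subrr wt0.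
by case: eqP => //= _; rewrite mul1n => /esym/eqP; rewrite expn_eq0.
Qed.
End Simplex.

Section ExtendedSimplex.
Variables (m r : nat) (a : 'rV['F_2]_m).
Local Notation V := 'rV['F_2]_m.
Local Notation n := (#|V|.-1 + r)%N.
Implicit Types u v : V.

Definition ext_simplex_mx : 'M['F_2]_(m, n) :=
  row_mx (simplex_mx m) (\matrix_(i < m, j < r) a 0 i).

Definition ext_simplex_code : bcode n := limg (linfun (mulmxr ext_simplex_mx)).

Lemma ext_simplex_codeP c :
  reflect (exists u, c = u *m ext_simplex_mx) (c \in ext_simplex_code).
Proof.
apply: (iffP memv_imgP) => [[u _ ->] | [u ->]]; exists u; rewrite ?lfunE ?memvf //.
Qed.

Lemma mul_ext_simplex_mx u :
  u *m ext_simplex_mx = row_mx (u *m simplex_mx m) (const_mx (inner u a)).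
Proof.
rewrite mul_mx_row; congr row_mx; apply/rowP => j.
by rewrite !mxE; apply: eq_bigr => i _; rewrite mxE.
Qed.

Lemma wt_const_mx (x : 'F_2) : wt (const_mx x : 'rV_r) = ((x != 0%R) * r)%N.
Proof.
rewrite wt_sum (eq_bigr (fun=> (x != 0%R) : nat)) => [|j _]; last by rewrite mxE.
by rewrite sum_nat_const card_ord mulnC.
Qed.

Lemma wt_ext_simplex u :
  wt (u *m ext_simplex_mx) = ((u != 0%R) * 2 ^ m.-1 + (inner u a != 0%R) * r)%N.
Proof. by rewrite mul_ext_simplex_mx wt_row_mx wt_simplex wt_const_mx. Qed.

Lemma mul_ext_simplex_mx_eq0 u : (u *m ext_simplex_mx == 0) = (u == 0).
Proof.
apply/eqP/eqP => [|->]; last exact: mul0mx.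
rewrite mul_ext_simplex_mx -row_mx0 => /eq_row_mx[uS0 _].
by apply: (@simplex_mx_inj m); rewrite uS0 mul0mx.
Qed.

Lemma dim_ext_simplex_code : \dim ext_simplex_code = m.
Proof.
rewrite limg_dim_eq ?dimvf ?dim_matrix ?mul1r //.
apply/eqP; rewrite -subv0; apply/subvP => u.
by rewrite memv_cap memvf memv_ker lfunE /= mul_ext_simplex_mx_eq0 memv0.
Qed.

Lemma ext_simplex_code_minimal : minimal_code ext_simplex_code.
Proof.
move=> _ _ /ext_simplex_codeP[u ->] /ext_simplex_codeP[v ->].
rewrite !mul_ext_simplex_mx_eq0 => u_neq0 v_neq0.
rewrite !mul_ext_simplex_mx => /supp_lsub_subset sub.
suff -> : v = u by [].
apply: (@simplex_mx_inj m); apply: supp_subset_eq sub _.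
by rewrite !wt_simplex u_neq0 v_neq0.
Qed.

Lemma ext_simplex_code_self_orthogonal :
  (4 %| 2 ^ m.-1)%N -> (4 %| r)%N -> self_orthogonal ext_simplex_code.
Proof.
move=> dvd4_k dvd4_r; apply: doubly_even_self_orthogonal => _ /ext_simplex_codeP[u ->].
by rewrite wt_ext_simplex dvdn_add // dvdn_mull.
Qed.

Lemma ext_simplex_code_wmin : (1 < m)%N -> is_wmin ext_simplex_code (2 ^ m.-1).
Proof.
move=> m_gt1; split.
  have [u u_neq0 ua0] := nonzero_orthogonal a m_gt1.
  exists (u *m ext_simplex_mx); first by apply/ext_simplex_codeP; exists u.
  by rewrite mul_ext_simplex_mx_eq0 wt_ext_simplex u_neq0 ua0 eqxx mul1n addn0 eqxx.
move=> _ /ext_simplex_codeP[u ->]; rewrite mul_ext_simplex_mx_eq0 => u_neq0.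
by rewrite wt_ext_simplex u_neq0 mul1n leq_addr.
Qed.

Lemma ext_simplex_code_wmax : a != 0 -> is_wmax ext_simplex_code (2 ^ m.-1 + r).
Proof.
move=> /nonzero_coord[i ai]; split.
  exists (delta_mx 0 i *m ext_simplex_mx); first by apply/ext_simplex_codeP; exists (delta_mx 0 i).
  rewrite mul_ext_simplex_mx_eq0 wt_ext_simplex inner_sym inner_delta ai delta_row_neq0.
  by rewrite !mul1n eqxx.
move=> _ /ext_simplex_codeP[u ->] _; rewrite wt_ext_simplex.
by apply: leq_add; rewrite -[leqRHS]mul1n leq_mul ?leq_b1.
Qed.
End ExtendedSimplex.

Lemma ratio_half k : (0 < k)%N -> (k%:R / (2 * k)%:R : rat) = 1 / 2.
Proof.
move=> k_gt0; have k_neq0 : (k%:R : rat) != 0 by rewrite pnatr_eq0 -lt0n.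
by rewrite natrM invfM mulrCA mulfV // mulr1 div1r.
Qed.

Theorem proposition5p2 (m : nat) (hm : (3 <= m)%N) :
  exists C : bcode (3 * 2 ^ m.-1 - 1)%N,
    [/\ \dim C = m /\ is_wmin C (2 ^ m.-1)%N,
        is_wmax C (2 ^ m)%N,
        self_orthogonal C,
        minimal_code C
      & ~ ashikhmin_barg C].
Proof.
have m_gt0 : (0 < m)%N by apply: leq_trans hm.
have k_gt0 : (0 < 2 ^ m.-1)%N by rewrite expn_gt0.
have -> : (3 * 2 ^ m.-1 - 1 = #|'rV['F_2]_m|.-1 + 2 ^ m.-1)%N.
  by rewrite card_rV_F2 (expn2_pred m_gt0); move: k_gt0; set k := (2 ^ m.-1)%N; lia.
set C := ext_simplex_code (2 ^ m.-1) (delta_mx 0 (Ordinal m_gt0)).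
have wmin : is_wmin C (2 ^ m.-1) by apply: ext_simplex_code_wmin; apply: leq_trans hm.
have wmax : is_wmax C (2 ^ m).
  by rewrite (expn2_pred m_gt0) mul2n -addnn; apply/ext_simplex_code_wmax/delta_row_neq0.
exists C; split => //.
- by split; first exact: dim_ext_simplex_code.
- by apply: ext_simplex_code_self_orthogonal => //; rewrite (@dvdn_exp2l 2 2) // -ltnS prednK.
- exact: ext_simplex_code_minimal.
- by move/(_ _ _ wmin wmax); rewrite (expn2_pred m_gt0) ratio_half // ltxx.
Qed.
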